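(* Let $f:\mathbb{R}^M\times\mathbb{R}^m\to\mathbb{R}^N$ be twice differentiable in $\boldsymbol{\theta}\in\mathbb{R}^m$, let $(\mathbf{x}_i,\mathbf{y}_i)_{i=1}^n$ be training data, and let $\varepsilon>0$, $M_0>0$. Suppose $\|f(\mathbf{x}_i,\boldsymbol{\theta})-\mathbf{y}_i\|_2<\varepsilon$ for all $i$, and $|\theta_j|^2\,\|\partial^2 f(\mathbf{x}_i,\boldsymbol{\theta})/\partial\theta_j^2\|_2<M_0$ for all $i$ and all $j\in\{1,\dots,m\}$. Then $$S_{\mathrm{adaptive}}(\boldsymbol{\theta})=\frac1n\sum_{i=1}^n\sum_{j=1}^m|\theta_j|^2\,\Big\|\frac{\partial f(\mathbf{x}_i,\boldsymbol{\theta})}{\partial\theta_j}\Big\|_2^2+O(\varepsilon),$$ where the implied constant depends only on $m$ and $M_0$.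
   Context: The loss is the MSE loss $L(\boldsymbol{\theta})=\frac1n\sum_{i=1}^n\frac12\|f(\mathbf{x}_i,\boldsymbol{\theta})-\mathbf{y}_i\|_2^2$. The elementwise-adaptive sharpness is $S_{\mathrm{adaptive}}(\boldsymbol{\theta})=\operatorname{Tr}\big(\nabla^2_{\boldsymbol{\theta}}L(\boldsymbol{\theta})\odot|\boldsymbol{\theta}||\boldsymbol{\theta}|^{T}\big)$, where $|\boldsymbol{\theta}|$ is the entrywise absolute value of the parameter vector and $\odot$ is the entrywise (Hadamard) product; equivalently $S_{\mathrm{adaptive}}(\boldsymbol{\theta})=\sum_{j=1}^m|\theta_j|^2\,\partial^2L/\partial\theta_j^2$. *)

From HB Require Import structures.
From mathcomp Require Import all_boot all_order all_algebra.
From mathcomp Require Import all_classical all_reals all_analysis.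
Set Implicit Arguments. Unset Strict Implicit. Unset Printing Implicit Defensive.
Import Order.TTheory GRing.Theory Num.Theory.
Import numFieldNormedType.Exports.
Local Open Scope ring_scope.

Definition norm2 {R : realType} {N : nat} (v : 'rV[R]_N) : R :=
  Num.sqrt (\sum_(k < N) (v 0 k) ^+ 2).

Definition basis_vec {R : realType} {m : nat} (j : 'I_m) : 'rV[R]_m :=
  delta_mx 0 j.

Definition pderiv {R : realType} {m : nat} {V : normedModType R}
  (g : 'rV[R]_m -> V) (j : 'I_m) (theta : 'rV[R]_m) : V :=
  'D_(basis_vec j) g theta.

Definition hessian {R : realType} {m : nat} (g : 'rV[R]_m -> R)
  (theta : 'rV[R]_m) : 'M[R]_m :=
  \matrix_(j < m, k < m) pderiv (pderiv g k) j theta.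

Definition mse_loss {R : realType} {M m N n : nat}
  (f : 'rV[R]_M -> 'rV[R]_m -> 'rV[R]_N)
  (x : 'I_n -> 'rV[R]_M) (y : 'I_n -> 'rV[R]_N) (theta : 'rV[R]_m) : R :=
  n%:R^-1 * \sum_(i < n) 2^-1 * (norm2 (f (x i) theta - y i)) ^+ 2.

Definition S_adaptive {R : realType} {M m N n : nat}
  (f : 'rV[R]_M -> 'rV[R]_m -> 'rV[R]_N)
  (x : 'I_n -> 'rV[R]_M) (y : 'I_n -> 'rV[R]_N) (theta : 'rV[R]_m) : R :=
  \tr (\matrix_(j < m, k < m)
         (hessian (mse_loss f x y) theta j k * (`|theta 0 j| * `|theta 0 k|))).

Definition twice_differentiable {R : realType} {m : nat} {W : normedModType R}
  (g : 'rV[R]_m -> W) : Prop :=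
  (forall t, differentiable g t) /\
  (forall (v : 'rV[R]_m) t, differentiable (fun s => 'D_v g s) t).

From HB Require Import structures.
From mathcomp Require Import all_boot all_order all_algebra.
From mathcomp Require Import all_classical all_reals all_analysis.
From mathcomp Require Import ring.
Set Implicit Arguments.
Unset Strict Implicit.
Import Order.TTheory GRing.Theory Num.Theory.
Import numFieldNormedType.Exports.
Local Open Scope ring_scope.

(* For the MSE loss the Hessian splits into a Gauss-Newton part and a
   residual-weighted curvature part:
     d_j d_k L = 1/n sum_i (<d_j f_i, d_k f_i> + <f_i - y_i, d_j d_k f_i>).
   Weighted by theta_j^2 along the diagonal, the Gauss-Newton part is exactly
   the main term.  By Cauchy-Schwarz each summand of the other part is at most
   ||f_i - y_i|| * theta_j^2 ||d_j^2 f_i|| < eps M0, so that part is at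
   most m M0 eps in absolute value. *)

Section Dot.
Context {R : realType} {N : nat}.
Implicit Types u v : 'rV[R]_N.

Definition dotr u v : R := \sum_(k < N) u 0 k * v 0 k.

Lemma dotrC u v : dotr u v = dotr v u.
Proof. by apply: eq_bigr => k _; rewrite mulrC. Qed.

Lemma sqr_norm2 u : norm2 u ^+ 2 = dotr u u.
Proof.
rewrite /norm2 sqr_sqrtr; last by apply: sumr_ge0 => k _; exact: sqr_ge0.
by apply: eq_bigr => k _; rewrite expr2.
Qed.

Lemma norm2_ge0 u : 0 <= norm2 u.
Proof. exact: sqrtr_ge0. Qed.

(* Lagrange's identity: the defect in Cauchy-Schwarz is a sum of squares. *)
Lemma dotr_lagrange u v :
  \sum_k \sum_l (u 0 k * v 0 l - u 0 l * v 0 k) ^+ 2 =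
  (dotr u u * dotr v v - dotr u v ^+ 2) *+ 2.
Proof.
have E k l : (u 0 k * v 0 l - u 0 l * v 0 k) ^+ 2 =
    u 0 k * u 0 k * (v 0 l * v 0 l) + v 0 k * v 0 k * (u 0 l * u 0 l)
    - (u 0 k * v 0 k * (u 0 l * v 0 l)) *+ 2 by ring.
under eq_bigr => k _ do
  rewrite (eq_bigr _ (fun l _ => E k l)) sumrB big_split sumrMnl /=.
by rewrite sumrB big_split sumrMnl /= -!big_distrlr /= /dotr; ring.
Qed.

Lemma dotr_sqr_le u v : dotr u v ^+ 2 <= dotr u u * dotr v v.
Proof.
rewrite -subr_ge0 -(pmulrn_lge0 _ (isT : (0 < 2)%N)) -dotr_lagrange.
by do 2!(apply: sumr_ge0 => ? _); exact: sqr_ge0.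
Qed.

Lemma norm_dotr_le u v : `|dotr u v| <= norm2 u * norm2 v.
Proof.
rewrite -ler_sqr ?nnegrE ?mulr_ge0 ?norm2_ge0 // real_normK ?num_real //.
by rewrite exprMn !sqr_norm2 dotr_sqr_le.
Qed.

End Dot.

Lemma is_derive_sumr (R : numFieldType) (V W : normedModType R) n
    (h : 'I_n -> V -> W) t v (dh : 'I_n -> W) :
  (forall i, is_derive t v (h i) (dh i)) ->
  is_derive t v (fun s => \sum_(i < n) h i s) (\sum_(i < n) dh i).
Proof. by move=> Dh; rewrite -fct_sumE; exact: is_derive_sum. Qed.

Lemma is_deriveMl (R : numFieldType) (V : normedModType R) (f : V -> R) (c : R)
    t v df :
  is_derive t v f df -> is_derive t v (c \*o f) (c * df).
Proof. exact: is_deriveZ. Qed.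

Section DotDerive.
Context {R : realType} {m N : nat}.
Local Notation V := 'rV[R]_m.
Implicit Types (g h : V -> 'rV[R]_N) (t v : V).

Lemma is_derive_mxE g t v dg i k :
  is_derive t v g dg -> is_derive t v (fun s => g s i k) (dg i k).
Proof.
case=> dgtv <-; split; first by move/derivable_mxP: dgtv; apply.
by rewrite (derive_mx dgtv) mxE.
Qed.

Lemma is_derive_dotr g h t v dg dh :
  is_derive t v g dg -> is_derive t v h dh ->
  is_derive t v (fun s => dotr (g s) (h s)) (dotr dg (h t) + dotr (g t) dh).
Proof.
move=> Dg Dh; rewrite /dotr -big_split /=.
apply: is_derive_sumr => k; apply: is_derive_eq.
  exact: is_deriveM (is_derive_mxE 0 k Dg) (is_derive_mxE 0 k Dh).
by rewrite /= addrC; congr (_ + _); exact: mulrC.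
Qed.

Lemma is_deriveB_cst g c t v dg :
  is_derive t v g dg -> is_derive t v (fun s => g s - c) dg.
Proof. by move=> Dg; apply: is_derive_eq (subr0 dg). Qed.

Lemma is_derive_half_sqr_norm2 g t v dg :
  is_derive t v g dg ->
  is_derive t v (fun s => 2^-1 * norm2 (g s) ^+ 2) (dotr (g t) dg).
Proof.
move=> Dg; under eq_fun do rewrite sqr_norm2.
apply: is_derive_eq (is_deriveMl 2^-1 (is_derive_dotr Dg Dg)) _.
by rewrite [dotr dg _]dotrC -mulr2n -[dotr _ _ *+ 2]mulr_natl mulKf ?pnatr_eq0.
Qed.

End DotDerive.

Section MSELoss.
Context {R : realType} {M m N n : nat}.
Variables (f : 'rV[R]_M -> 'rV[R]_m -> 'rV[R]_N)
          (x : 'I_n -> 'rV[R]_M) (y : 'I_n -> 'rV[R]_N).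
Hypothesis f_twice : forall i, twice_differentiable (f (x i)).

Let is_derive_f i t v : is_derive t v (f (x i)) ('D_v (f (x i)) t).
Proof. exact/derivableP/diff_derivable/(f_twice i).1. Qed.

Let is_derive_pderiv_f i k t v :
  is_derive t v (pderiv (f (x i)) k) ('D_v (pderiv (f (x i)) k) t).
Proof. exact/derivableP/diff_derivable/(f_twice i).2. Qed.

Lemma pderiv_mse_loss j :
  pderiv (mse_loss f x y) j =
  fun t => n%:R^-1 * \sum_i dotr (f (x i) t - y i) (pderiv (f (x i)) j t).
Proof.
apply/funext => t; apply: derive_val.
apply: is_deriveMl (is_derive_sumr _) => i.
exact/is_derive_half_sqr_norm2/is_deriveB_cst/is_derive_f.
Qed.

Lemma hessian_mse_loss theta j k :
  hessian (mse_loss f x y) theta j k =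
  n%:R^-1 * \sum_i (dotr (pderiv (f (x i)) j theta) (pderiv (f (x i)) k theta)
    + dotr (f (x i) theta - y i) (pderiv (pderiv (f (x i)) k) j theta)).
Proof.
rewrite /hessian mxE pderiv_mse_loss; apply: derive_val.
apply: is_deriveMl (is_derive_sumr _) => i.
exact: is_derive_dotr (is_deriveB_cst _ (is_derive_f _ _ _))
                      (is_derive_pderiv_f _ _ _ _).
Qed.

Lemma S_adaptive_mse theta :
  S_adaptive f x y theta =
  n%:R^-1 * \sum_i \sum_j
      `|theta 0 j| ^+ 2 * norm2 (pderiv (f (x i)) j theta) ^+ 2
  + n%:R^-1 * \sum_i \sum_j `|theta 0 j| ^+ 2 *
      dotr (f (x i) theta - y i) (pderiv (pderiv (f (x i)) j) j theta).
Proof.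
rewrite -mulrDr -big_split /=.
under eq_bigr do rewrite -big_split /=.
rewrite exchange_big mulr_sumr /S_adaptive /mxtrace.
apply: eq_bigr => j _; rewrite mxE hessian_mse_loss mulrAC -expr2.
rewrite -mulrA mulr_sumr; congr (_ * _); apply: eq_bigr => i _.
by rewrite sqr_norm2 mulrDr.
Qed.

End MSELoss.

Lemma norm_mean_sum_le (R : realType) (n m : nat) (a : 'I_n -> 'I_m -> R)
    (B : R) :
  0 <= B -> (forall i j, `|a i j| <= B) ->
  `|n%:R^-1 * \sum_i \sum_j a i j| <= m%:R * B.
Proof.
move=> B_ge0; case: n a => [a _|n a aB].
  by rewrite big_ord0 mulr0 normr0 mulr_ge0.
rewrite normrM ger0_norm ?invr_ge0 // ler_pdivrMl ?ltr0Sn //.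
apply: le_trans (ler_norm_sum _ _ _) _.
apply: le_trans (ler_sum _ (fun i _ => le_trans (ler_norm_sum _ _ _)
                                      (ler_sum _ (fun j _ => aB i j)))) _.
by rewrite !sumr_const !card_ord !mulr_natl.
Qed.

Theorem lemma4 (R : realType) (m : nat) (M0 : R) :
  0 < M0 ->
  exists C : R,
  forall (M N n : nat) (f : 'rV[R]_M -> 'rV[R]_m -> 'rV[R]_N)
         (x : 'I_n -> 'rV[R]_M) (y : 'I_n -> 'rV[R]_N)
         (theta : 'rV[R]_m) (eps : R),
    0 < eps ->
    (forall z : 'rV[R]_M, twice_differentiable (f z)) ->
    (forall i : 'I_n, norm2 (f (x i) theta - y i) < eps) ->
    (forall (i : 'I_n) (j : 'I_m),
        `|theta 0 j| ^+ 2 * norm2 (pderiv (pderiv (f (x i)) j) j theta) < M0) ->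
    `| S_adaptive f x y theta
       - n%:R^-1 * \sum_(i < n) \sum_(j < m)
            `|theta 0 j| ^+ 2 * (norm2 (pderiv (f (x i)) j theta)) ^+ 2 |
    <= C * eps.
Proof.
move=> M0_gt0; exists (m%:R * M0).
move=> M N n f x y theta eps eps_gt0 f_twice residual_lt curvature_lt.
rewrite S_adaptive_mse // addrC addKr -mulrA.
apply: norm_mean_sum_le => [|i j]; first by rewrite mulr_ge0 ?ltW.
rewrite normrM ger0_norm ?sqr_ge0 //.
apply: le_trans (ler_wpM2l (sqr_ge0 _) (norm_dotr_le _ _)) _.
rewrite mulrCA mulrC; apply: ler_pM; rewrite ?mulr_ge0 ?sqr_ge0 ?norm2_ge0 //.
  exact/ltW/curvature_lt.
exact/ltW/residual_lt.
Qed.
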